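(* Let $\Phi$ be a finite NCIFS on $X\subset\mathbb R^d$, let $t_0>0$, and let $(\alpha_n)$ be a sequence with $\alpha_n\ge1$ and $\alpha_n\to\infty$. Then there exist sets $I^{(n)}_f\subset I^{(n)}$ such that the subsystem $\Phi_f$, with $\Phi_f^{(n)}=(\phi^{(n)}_a)_{a\in I^{(n)}_f}$, has the following properties: - $\underline P^{\Phi_f}(t)=\underline P^{\Phi}(t)$ for all $t\ge t_0$; - for all $n$, \[\rho_n(\Phi_f):=\max_{a,b\in I^{(n)}_f}\frac{\|D\phi^{(n)}_a\|}{\|D\phi^{(n)}_b\|}\le\alpha_n\,(\# I^{(n)})^{1/t_0}.\]
   Context: Fix $d\in\mathbb N$ and a compact set $X\subset\mathbb R^d$ equal to the closure of its interior, such that $\partial X$ is smooth or $X$ is convex. $\|D\phi\|:=\sup_{x\in X}|\phi'(x)|$ for a conformal map $\phi$. An NCIFS $\Phi$ on $X$ is a sequence $\Phi^{(j)}=(\phi^{(j)}_i:X\to X)_{i\in I^{(j)}}$, $j\ge1$, of families indexed by finite or countably infinite sets, satisfying: - (open set condition) images of $\operatorname{int}X$ under distinct maps of the same $\Phi^{(j)}$ are disjoint; - (conformality) there is an open connected $V\supset X$ such that all maps extend to $C^1$ conformal diffeomorphisms of $V$ into $V$; - (bounded distortion) there is $K\ge1$ with $|\phi'(x)|\le K|\phi'(y)|$ for $x,y\in V$ and every composition $\phi=\phi^{(k)}_{\omega_k}\circ\cdots\circ\phi^{(l)}_{\omega_l}$, $k\le l$; - (uniform contraction) $\|D\phi^{(j)}_i\|\le\eta<1$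 for all $i,j$. Finite means every $I^{(j)}$ is finite. For $\omega\in I^n=\prod_{j\le n}I^{(j)}$ let $\phi_\omega=\phi^{(1)}_{\omega_1}\circ\cdots\circ\phi^{(n)}_{\omega_n}$. For a system $\Psi$, $Z^\Psi_n(t)=\sum_{\omega\in I^n}\|D\phi_\omega\|^t$ over its words, and $\underline P^\Psi(t)=\liminf_n\frac1n\log Z^\Psi_n(t)$. *)

From HB Require Import structures.
From mathcomp Require Import all_boot all_order all_algebra.
From mathcomp Require Import all_classical all_reals all_analysis.
Set Implicit Arguments. Unset Strict Implicit. Unset Printing Implicit Defensive.
Import Order.TTheory GRing.Theory Num.Theory.
Import numFieldNormedType.Exports.
Local Open Scope classical_set_scope.
Local Open Scope ring_scope.

Section NCIFS.
Variables (R : realType) (d : nat).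
Notation V := 'rV[R]_d.

(* Euclidean norm on R^d (the library norm on 'rV is the sup norm). *)
Definition enorm (v : V) : R := Num.sqrt (\sum_(i < d) (v ord0 i) ^+ 2).

(* |phi'(x)| : operator norm (w.r.t. the Euclidean norm) of the derivative;
   for a conformal map this is the similarity ratio of D phi(x). *)
Definition dnorm (phi : V -> V) (x : V) : R :=
  sup [set enorm ('d phi x h) | h in [set h : V | enorm h = 1]].

Definition Dnorm (X : set V) (phi : V -> V) : R :=
  sup [set dnorm phi x | x in X].

Definition convex_setE (X : set V) : Prop :=
  forall x y (t : R), X x -> X y -> 0 <= t <= 1 -> X (t *: x + (1 - t) *: y).

Fixpoint iterD (vs : seq V) (g : V -> R) : V -> R :=
  match vs with
  | [::] => g
  | v :: vs' => fun x => 'D_v (iterD vs' g) x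
  end.

Definition smooth_on (U : set V) (g : V -> R) : Prop :=
  forall (vs : seq V) x, U x -> differentiable (iterD vs g) x.

(* the boundary of X is a smooth hypersurface: locally X = {g <= 0},
   g smooth with nonvanishing differential. *)
Definition smooth_boundary (X : set V) : Prop :=
  forall p, (closure X `\` X°) p ->
  exists (U : set V) (g : V -> R),
    [/\ open U, U p, smooth_on U g, (exists h, 'd g p h != 0)
      & X `&` U = [set x | U x /\ g x <= 0]].

Definition admissible_X (X : set V) : Prop :=
  [/\ compact X, X = closure (X°) & (smooth_boundary X \/ convex_setE X)].

(* A finite non-autonomous system: stage j (j = 0,1,2,... stands for the
   paper's stage j+1) has index set 'I_(N j) and maps phi j i. *)
Definition comp_seq (fs : seq (V -> V)) : V -> V := foldr (fun f g => f \o g) id fs.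

Definition comp_from (N : nat -> nat) (phi : forall j, 'I_(N j) -> V -> V)
  (k m : nat) (w : forall j : 'I_m, 'I_(N (k + j))) : V -> V :=
  comp_seq [seq phi (k + j)%N (w j) | j : 'I_m <- enum 'I_m].

Definition comp_word (N : nat -> nat) (phi : forall j, 'I_(N j) -> V -> V)
  (n : nat) (w : {dffun forall j : 'I_n, 'I_(N j)}) : V -> V :=
  comp_seq [seq phi j (w j) | j : 'I_n <- enum 'I_n].

Definition conformal_C1_into (U : set V) (f : V -> V) : Prop :=
  [/\ (forall x, U x -> U (f x)),
      {in U &, injective f},
      (forall x, U x -> differentiable f x),
      (forall h x, U x -> {for x, continuous (fun y => 'd f y h)})
    & (forall x, U x -> exists2 c : R, 0 < c &
          forall h, enorm ('d f x h) = c * enorm h)].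

Definition is_NCIFS (X : set V) (N : nat -> nat)
  (phi : forall j, 'I_(N j) -> V -> V) : Prop :=
  [/\ (forall j i, phi j i @` X `<=` X),
      (forall j (i i' : 'I_(N j)), i != i' ->
          phi j i @` X° `&` phi j i' @` X° = set0),
      (exists U : set V, [/\ open U, connected U, X `<=` U,
          (forall j i, conformal_C1_into U (phi j i)) &
          exists2 K : R, 1 <= K &
            forall k m (w : forall j : 'I_m.+1, 'I_(N (k + j)%N)) x y,
              U x -> U y ->
              dnorm (comp_from phi w) x <= K * dnorm (comp_from phi w) y])
    &
      (exists2 eta : R, eta < 1 & forall j i, Dnorm X (phi j i) <= eta)].

Definition Zn (X : set V) (N : nat -> nat) (phi : forall j, 'I_(N j) -> V -> V)
  (n : nat) (t : R) : R :=
  \sum_(w : {dffun forall j : 'I_n, 'I_(N j)}) (Dnorm X (comp_word phi w)) `^ t.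

Definition lower_pressure (X : set V) (N : nat -> nat)
  (phi : forall j, 'I_(N j) -> V -> V) (t : R) : \bar R :=
  limn_einf (fun n => ((ln (Zn X phi n.+1 t)) / n.+1%:R)%:E).

(* the subsystem (phi^(j)_a)_{a in F j}, reindexed by 'I_#|F j| *)
Definition subN (N : nat -> nat) (F : forall j, {set 'I_(N j)}) (j : nat) : nat :=
  #|F j|.
Definition subphi (N : nat -> nat) (phi : forall j, 'I_(N j) -> V -> V)
  (F : forall j, {set 'I_(N j)}) (j : nat) (i : 'I_(subN F j)) : V -> V :=
  phi j (enum_val i).

End NCIFS.
Arguments subphi {R d N} phi F j i.
Arguments subN {N} F j.

From HB Require Import structures.
From mathcomp Require Import all_boot all_order all_algebra.
From mathcomp Require Import all_classical all_reals all_analysis.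
From mathcomp Require Import ring.
Import Order.TTheory GRing.Theory Num.Theory.
Import numFieldNormedType.Exports.
Local Open Scope classical_set_scope.
Local Open Scope ring_scope.
Set Implicit Arguments. Unset Strict Implicit. Unset Printing Implicit Defensive.

(* Keep at stage [k] the letters [a] with [||D phi_m|| <= c_k ||D phi_a||], where
   [m] is a letter of largest derivative and [c_k = alpha_k N_k^(1/t0)]; any two
   kept letters then have ratio at most [c_k]. Replacing, in a word, a discarded
   letter [a] at position [k] by [m] is injective on words with that letter
   and, by bounded distortion, multiplies [||D phi_w||] by at least
   [||D phi_m|| / (K^3 ||D phi_a||)] >= [c_k / K^3]. Since there are at most
   [N_k] discarded letters and [c_k^t >= alpha_k^t N_k] for [t >= t0], restricting
   the [k]-th letter costs at most a factor [1 + K^(3t) / alpha_k^t] in [Z_n(t)].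
   Hence [ln Z_n - ln Z_n^f <= \sum_(k < n) K^(3t) alpha_k^(-t) = o(n)], and the
   lower pressures agree. *)

Section RealLemmas.
Variable R : realType.

(* Stated over bare reals: on the actual terms [ring] would try to unfold the
   [sup]s hidden in [dnorm] and [Dnorm]. *)
Lemma ler_distortion3 (K p p' a a' b b' s W : R) :
  0 <= K -> 0 <= p -> 0 <= a -> 0 <= a' -> 0 <= b -> 0 <= s ->
  p <= K * p' -> a <= K * a' -> b <= K * b' -> p' * (b' * s) <= W ->
  p * (a * s) * b <= K ^+ 3 * a' * W.
Proof.
move=> K0 p0 a0 a'0 b0 s0 hp ha hb hW.
apply: (le_trans (y := K * p' * (K * a' * s) * (K * b'))).
  by apply: ler_pM; rewrite ?mulr_ge0 // ler_pM ?mulr_ge0 // ler_pM.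
rewrite [leLHS](_ : _ = K ^+ 3 * a' * (p' * (b' * s))); last by ring.
by apply: ler_wpM2l hW; rewrite mulr_ge0 ?exprn_ge0.
Qed.

Lemma sup_ge0 (E : set R) : (forall x, E x -> 0 <= x) -> 0 <= sup E.
Proof.
move=> E0; have [[[x Ex] ubE]|noSup] := pselect (has_sup E).
  by apply: le_trans (E0 _ Ex) _; exact: ub_le_sup.
by rewrite sup_out.
Qed.

Lemma ler_sum_nneg_subset (I : finType) (P Q : pred I) (g : I -> R) :
  (forall i, P i -> Q i) -> (forall i, Q i -> 0 <= g i) ->
  \sum_(i | P i) g i <= \sum_(i | Q i) g i.
Proof.
move=> PQ g0; rewrite [X in _ <= X](bigID P) /= -[X in X <= _]addr0.
apply: lerD.
  by rewrite (eq_bigl P) // => i; apply/andP/idP => [[]//|Pi]; split => //; apply: PQ.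
by apply: sumr_ge0 => i /andP[Qi _]; exact: g0.
Qed.

Lemma powR_scaled_ratio_le (t s c al M a b : R) : 0 < s -> s <= t -> 1 <= al ->
  1 <= M -> 0 <= c -> 0 <= a -> 0 < b -> al * M `^ s^-1 * a <= b ->
  (c * a / b) `^ t <= c `^ t / (al `^ t * M).
Proof.
move=> s0 st al1 M1 c0 a0 b0 hab.
have t0 : 0 < t := lt_le_trans s0 st.
have al0 : 0 < al := lt_le_trans ltr01 al1.
have M0 : 0 < M := lt_le_trans ltr01 M1.
set q := M `^ s^-1.
have alq0 : 0 < al * q by apply: mulr_gt0 => //; exact: powR_gt0.
have r0 : 0 <= c / (al * q) by apply: divr_ge0 => //; exact: ltW.
have cab : c * a / b <= c / (al * q).
  rewrite -mulrA; apply: (ler_wpM2l c0).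
  by rewrite ler_pdivrMr // -(ler_pM2l alq0) mulrA mulfV ?mul1r // lt0r_neq0.
have Mq : M <= q `^ t.
  rewrite /q -powRrM -[X in X <= _](powRr1 (ltW M0)); apply: (ler_powR M1).
  by rewrite -(ler_pM2l s0) mulr1 mulrA mulfV ?mul1r // lt0r_neq0.
have cE : c `^ t = (c / (al * q)) `^ t * (al `^ t * q `^ t).
  rewrite -(powRM _ (ltW al0) (powR_ge0 _ _)) -(powRM _ r0 (ltW alq0)).
  by rewrite divfK // lt0r_neq0.
have cab0 : 0 <= c * a / b by apply: divr_ge0; [exact: mulr_ge0|exact: ltW].
apply: (le_trans (ge0_ler_powR (ltW t0) _ _ cab)); rewrite ?nnegrE //.
rewrite cE (ler_pdivlMr _ _ (mulr_gt0 (powR_gt0 _ al0) M0)).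
by apply: (ler_wpM2l (powR_ge0 _ _)); apply: (ler_wpM2l (powR_ge0 _ _)).
Qed.

Lemma sum_powR_scaled_ratio_le (I : finType) (P : pred I) (D : I -> R) (t s c al b : R) :
  0 < s -> s <= t -> 1 <= al -> 0 <= c -> 0 < b -> (forall i, 0 <= D i) -> (0 < #|I|)%N ->
  (forall i, P i -> al * #|I|%:R `^ s^-1 * D i <= b) ->
  \sum_(i | P i) (c * D i / b) `^ t <= c `^ t / al `^ t.
Proof.
move=> s0 st al1 c0 b0 D0 I0 hD.
have M1 : 1 <= #|I|%:R :> R by rewrite ler1n.
have al0 : 0 < al := lt_le_trans ltr01 al1.
set r := c `^ t / (al `^ t * #|I|%:R).
apply: (le_trans (y := \sum_(i | P i) r)).
  apply: ler_sum => i Pi.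
  exact: (powR_scaled_ratio_le s0 st al1 M1 c0 (D0 i) b0 (hD i Pi)).
apply: (le_trans (y := \sum_(i : I) r)).
  apply: ler_sum_nneg_subset => // i _; apply: divr_ge0; first exact: powR_ge0.
  by apply: mulr_ge0; [exact: powR_ge0|exact: ler0n].
rewrite sumr_const -mulr_natr /r le_eqVlt; apply/orP; left; apply/eqP.
field; rewrite !lt0r_neq0 ?powR_gt0 //; exact: lt_le_trans M1.
Qed.

Lemma ln_prod1D_le_sum n (u : nat -> R) : (forall j, 0 <= u j) ->
  ln (\prod_(j < n) (1 + u j)) <= \sum_(j < n) u j.
Proof.
move=> u0.
have P0 : 0 < \prod_(j < n) (1 + u j).
  by apply: prodr_gt0 => j _; apply: (lt_le_trans ltr01); rewrite lerDl.
rewrite -[X in _ <= X]expRK ler_ln ?posrE ?expR_gt0 // expR_sum.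
apply: ler_prod => j _; rewrite addr_ge0 ?ler01 //=; exact: expR_ge1Dx.
Qed.

Lemma cvg_div_powR (alpha : nat -> R) (c t : R) : 0 <= c -> 0 < t ->
  (forall n, 0 < alpha n) -> alpha @ \oo --> +oo ->
  (fun n => c / alpha n `^ t) @ \oo --> 0.
Proof.
move=> c0 t0 al0 /cvgryPge hal; apply/cvgrPdist_le => eps eps0.
apply: filterS (hal ((c / eps) `^ t^-1)) => n hn.
have at0 : 0 < alpha n `^ t by exact: powR_gt0.
have ce0 : 0 <= c / eps by apply: divr_ge0 => //; exact: ltW.
rewrite sub0r normrN ger0_norm ?divr_ge0 ?powR_ge0 //.
rewrite ler_pdivrMr // -ler_pdivrMl // mulrC.
have -> : c / eps = ((c / eps) `^ t^-1) `^ t.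
  by rewrite -powRrM mulVf ?powRr1 // lt0r_neq0.
by apply: (ge0_ler_powR (ltW t0)); rewrite ?nnegrE ?powR_ge0 // ltW.
Qed.

Lemma limn_einf_sandwich (a b e : nat -> R) :
  (forall n, a n <= b n) -> (forall n, b n <= a n + e n) -> e @ \oo --> 0 ->
  limn_einf (fun n => (a n)%:E) = limn_einf (fun n => (b n)%:E).
Proof.
move=> ab bae he; apply/le_anti/andP; split; last first.
  apply/lee_addgt0Pr => eps eps0.
  rewrite addeC -limn_einf_shift // !limn_einf_lim.
  apply: lee_lim; [exact: is_cvg_einfs|exact: is_cvg_einfs|].
  move/cvgrPdist_le: he => /(_ eps eps0) [N0 _ hN].
  exists N0 => // n /= hn.
  apply: le_ereal_inf_tmp => _ [k /= hk <-].
  apply: le_trans (ereal_inf_lbound _) _; first by exists k.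
  rewrite lee_fin addrC (le_trans (bae k)) // lerD2l.
  have := hN k (leq_trans hn hk); rewrite /= sub0r normrN.
  exact/le_trans/ler_norm.
rewrite !limn_einf_lim; apply: lee_lim; [exact: is_cvg_einfs|exact: is_cvg_einfs|].
apply: nearW => n; apply: le_ereal_inf_tmp => _ [k /= hk <-].
apply: le_trans (ereal_inf_lbound _) _; first by exists k.
by rewrite lee_fin.
Qed.

(* By Cesaro, [ln (\prod_(j < n) (1 + u j)) <= \sum_(j < n) u j = o(n)]. *)
Lemma limn_einf_ln_div_eq (a b u : nat -> R) :
  (forall n, 0 < a n) -> (forall n, a n <= b n) ->
  (forall n, b n <= \prod_(j < n.+1) (1 + u j) * a n) ->
  (forall j, 0 <= u j) -> u @ \oo --> 0 ->
  limn_einf (fun n => (ln (a n) / n.+1%:R)%:E) =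
  limn_einf (fun n => (ln (b n) / n.+1%:R)%:E).
Proof.
move=> a0 ab bpa u0 u_cvg.
apply: (limn_einf_sandwich (e := arithmetic_mean u)) => [n|n|]; last exact: cesaro.
  apply: ler_wpM2r; first by rewrite invr_ge0.
  by rewrite ler_ln ?posrE // (lt_le_trans (a0 n)).
have P0 : 0 < \prod_(j < n.+1) (1 + u j).
  by apply: prodr_gt0 => j _; apply: (lt_le_trans ltr01); rewrite lerDl.
rewrite /arithmetic_mean /series /= big_mkord [_^-1 * _]mulrC -mulrDl.
apply: ler_wpM2r; first by rewrite invr_ge0.
apply: (le_trans (y := ln (\prod_(j < n.+1) (1 + u j) * a n))).
  by rewrite ler_ln ?posrE ?mulr_gt0 // (lt_le_trans (a0 n)).
by rewrite lnM ?posrE // addrC lerD2l; exact: ln_prod1D_le_sum.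
Qed.

End RealLemmas.

Section Conformal.
Variables (R : realType) (d : nat) (hd : (0 < d)%N).
Notation V := 'rV[R]_d.

Definition conformal_at (f : V -> V) (x : V) :=
  differentiable f x /\
  exists2 c : R, 0 < c & forall h, enorm ('d f x h) = c * enorm h.

Definition conformal_on (U : set V) (f : V -> V) :=
  (forall x, U x -> U (f x)) /\ (forall x, U x -> conformal_at f x).

Lemma dnorm_similarity (f : V -> V) x c :
  (forall h, enorm ('d f x h) = c * enorm h) -> dnorm f x = c.
Proof.
move=> hc; pose e : V := \row_(i < d) (i == Ordinal hd)%:R.
have e1 : enorm e = 1.
  rewrite /enorm (bigD1 (Ordinal hd)) //= big1 ?addr0.
    by rewrite mxE eqxx expr1n sqrtr1.
  by move=> i hi; rewrite mxE (negbTE hi) expr0n.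
rewrite /dnorm; have -> : [set enorm ('d f x h) | h in [set h : V | enorm h = 1]] = [set c].
  apply/seteqP; split => y /=; first by move=> [h /= h1 <-]; rewrite hc h1 mulr1.
  by move=> ->; exists e; rewrite /= ?e1 // hc e1 mulr1.
by rewrite sup1.
Qed.

Lemma dnorm_ge0 (f : V -> V) x : 0 <= dnorm f x.
Proof. by apply: sup_ge0 => _ [h _ <-]; exact: sqrtr_ge0. Qed.

Lemma Dnorm_ge0 (X : set V) (f : V -> V) : 0 <= Dnorm X f.
Proof. by apply: sup_ge0 => _ [x _ <-]; exact: dnorm_ge0. Qed.

Lemma dnorm_conformal_gt0 (f : V -> V) x : conformal_at f x -> 0 < dnorm f x.
Proof. by move=> [_ [c c0 hc]]; rewrite (dnorm_similarity hc). Qed.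

Lemma conformal_at_comp (f g : V -> V) x : conformal_at g x -> conformal_at f (g x) ->
  conformal_at (f \o g) x.
Proof.
move=> [dg [cg cg0 hg]] [df [cf cf0 hf]]; split; first exact: differentiable_comp.
exists (cf * cg) => [|h]; first exact: mulr_gt0.
by rewrite diff_comp // /= hf hg mulrA.
Qed.

Lemma dnorm_comp (f g : V -> V) x : conformal_at g x -> conformal_at f (g x) ->
  dnorm (f \o g) x = dnorm f (g x) * dnorm g x.
Proof.
move=> [dg [cg _ hg]] [df [cf _ hf]].
rewrite (dnorm_similarity hf) (dnorm_similarity hg); apply: dnorm_similarity => h.
by rewrite diff_comp // /= hf hg mulrA.
Qed.

Lemma dnorm_id (x : V) : dnorm id x = 1.
Proof. by apply: dnorm_similarity => h; rewrite diff_val mul1r. Qed.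

Lemma conformal_on_C1 U f : conformal_C1_into U f -> conformal_on U f.
Proof. by move=> [fU _ df _ cf]; split => // x Ux; split; [exact: df|exact: cf]. Qed.

Lemma conformal_on_comp U (f g : V -> V) :
  conformal_on U f -> conformal_on U g -> conformal_on U (f \o g).
Proof.
move=> [fU cf] [gU cg]; split => x Ux; first exact/fU/gU.
exact: conformal_at_comp (cg _ Ux) (cf _ (gU _ Ux)).
Qed.

Lemma conformal_on_comp_seq U (fs : seq (V -> V)) :
  (forall f, f \in fs -> conformal_on U f) -> conformal_on U (comp_seq fs).
Proof.
elim: fs => [_|f fs IH cfs].
  split => x Ux //; split; first exact: ex_diff.
  by exists 1 => // h; rewrite diff_val mul1r.
apply: conformal_on_comp; first by apply: cfs; rewrite inE eqxx.
by apply: IH => g gfs; apply: cfs; rewrite inE gfs orbT.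
Qed.

Lemma dnorm_comp_on U (f g : V -> V) x :
  conformal_on U f -> conformal_on U g -> U x ->
  dnorm (f \o g) x = dnorm f (g x) * dnorm g x.
Proof. by move=> [_ cf] [gU cg] Ux; apply: dnorm_comp; [exact: cg|exact/cf/gU]. Qed.

Lemma dnorm_gt0_on U (f : V -> V) x : conformal_on U f -> U x -> 0 < dnorm f x.
Proof. by move=> [_ cf] Ux; apply/dnorm_conformal_gt0/cf. Qed.

Lemma comp_seq_cat (fs gs : seq (V -> V)) :
  comp_seq (fs ++ gs) = comp_seq fs \o comp_seq gs.
Proof. by elim: fs => // f fs IH; rewrite cat_cons /= IH. Qed.

End Conformal.

Section System.
Variables (R : realType) (d : nat) (hd : (0 < d)%N).
Notation V := 'rV[R]_d.
Unset Implicit Arguments.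
Variables (X : set V) (N : nat -> nat) (phi : forall j, 'I_(N j) -> V -> V)
  (U : set V) (K : R).
Hypotheses (XU : X `<=` U) (phiU : forall j i, conformal_C1_into U (phi j i))
  (K1 : 1 <= K)
  (phi_dist : forall k m (w : forall j : 'I_m.+1, 'I_(N (k + j)%N)) x y, U x -> U y ->
     dnorm (comp_from phi w) x <= K * dnorm (comp_from phi w) y).
Set Implicit Arguments.

Definition bounded_distortion (f : V -> V) :=
  forall y z, U y -> U z -> dnorm f y <= K * dnorm f z.

Lemma dnorm_le_Dnorm (f : V -> V) x : bounded_distortion f -> X x -> dnorm f x <= Dnorm X f.
Proof.
move=> df Xx; apply: ub_le_sup; last by exists x.
by exists (K * dnorm f x) => _ [z Xz <-]; apply: df; exact: XU.
Qed.

Lemma Dnorm_le_dnorm (f : V -> V) x0 y : bounded_distortion f -> X x0 -> U y ->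
  Dnorm X f <= K * dnorm f y.
Proof.
move=> df X0 Uy; apply: ge_sup; first by exists (dnorm f x0), x0.
by move=> _ [z Xz <-]; apply: df => //; exact: XU.
Qed.

Lemma Dnorm_gt0 (f : V -> V) x0 : conformal_on U f -> bounded_distortion f -> X x0 ->
  0 < Dnorm X f.
Proof.
move=> cf df X0; apply: (lt_le_trans _ (dnorm_le_Dnorm df X0)).
exact: (dnorm_gt0_on hd cf (XU _ X0)).
Qed.

Lemma distortion_iota k m (G : nat -> V -> V) :
  (forall i, (k <= i < k + m.+1)%N -> exists a : 'I_(N i), G i = phi i a) ->
  bounded_distortion (comp_seq (map G (iota k m.+1))).
Proof.
move=> hG.
have hw (j : 'I_m.+1) : exists a : 'I_(N (k + j)), G (k + j)%N = phi (k + j) a.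
  by apply: hG; rewrite leq_addr /= ltn_add2l.
pose w j := sval (cid (hw j)).
suff -> : comp_seq (map G (iota k m.+1)) = comp_from phi w by exact: phi_dist.
rewrite /comp_from -[k in iota k]addn0 iotaDl -val_enum_ord -!map_comp.
by congr comp_seq; apply: eq_map => j /=; rewrite /w; case: cid.
Qed.

Lemma distortion_prefix k (G : nat -> V -> V) :
  (forall i, (i < k)%N -> exists a : 'I_(N i), G i = phi i a) ->
  bounded_distortion (comp_seq (map G (iota 0 k))).
Proof.
case: k => [_ y z _ _|k hG]; first by rewrite /= !(dnorm_id hd) mulr1.
by apply: distortion_iota => i /andP[_]; exact: hG.
Qed.

Lemma distortion_letter j (a : 'I_(N j)) : bounded_distortion (phi j a).
Proof.
rewrite -[phi j a]/(comp_seq (map (fun=> phi j a) (iota j 1))).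
apply: distortion_iota => i /andP[ji ij].
have ij' : i = j by apply/eqP; rewrite eqn_leq ji -ltnS -(addn1 j) ij.
by subst i; exists a.
Qed.

Lemma conformal_on_letters (s : seq nat) (G : nat -> V -> V) :
  (forall i, i \in s -> exists a : 'I_(N i), G i = phi i a) ->
  conformal_on U (comp_seq (map G s)).
Proof.
move=> hG; apply: conformal_on_comp_seq => f /mapP [i si ->].
by have [a ->] := hG i si; exact: (conformal_on_C1 (phiU _ _)).
Qed.

Notation word n := {dffun forall j : 'I_n, 'I_(N j)}.

Definition letter_fun n (w : word n) : nat -> V -> V :=
  fun i => if (insub i : option 'I_n) is Some j then phi j (w j) else id.

Lemma letter_fun_ord n (w : word n) (j : 'I_n) : letter_fun w j = phi j (w j).
Proof. by rewrite /letter_fun valK. Qed.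

Lemma letter_funP n (w : word n) i : (i < n)%N ->
  exists a : 'I_(N i), letter_fun w i = phi i a.
Proof.
by move=> ni; exists (w (Ordinal ni)); rewrite -[in LHS]/(nat_of_ord (Ordinal ni)) letter_fun_ord.
Qed.

Lemma comp_wordE n (w : word n) : comp_word phi w = comp_seq (map (letter_fun w) (iota 0 n)).
Proof.
rewrite /comp_word -val_enum_ord -map_comp; congr comp_seq.
by apply: eq_map => j /=; rewrite letter_fun_ord.
Qed.

Lemma conformal_on_word n (w : word n) : conformal_on U (comp_word phi w).
Proof.
rewrite comp_wordE; apply: conformal_on_letters => i; rewrite mem_iota => /andP[_ ni].
exact: letter_funP.
Qed.

Lemma distortion_word n (w : word n) : (0 < n)%N -> bounded_distortion (comp_word phi w).
Proof. by move=> n0; rewrite comp_wordE; apply: distortion_prefix => i; exact: letter_funP. Qed.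

Definition prefix_comp n (w : word n) k := comp_seq (map (letter_fun w) (iota 0 k)).
Definition suffix_comp n (w : word n) k :=
  comp_seq (map (letter_fun w) (iota k.+1 (n - k.+1))).

Lemma comp_word_split n (w : word n) (k : 'I_n) :
  comp_word phi w = prefix_comp w k \o (phi k (w k) \o suffix_comp w k).
Proof.
have en : iota 0 n = iota 0 k ++ (k : nat) :: iota k.+1 (n - k.+1).
  have e : n = (k + (n - k.+1).+1)%N by rewrite subnSK // subnKC // ltnW.
  by rewrite {1}e iotaD.
by rewrite comp_wordE en map_cat comp_seq_cat map_cons letter_fun_ord.
Qed.

Lemma conformal_on_prefix n (w : word n) (k : 'I_n) : conformal_on U (prefix_comp w k).
Proof.
apply: conformal_on_letters => i; rewrite mem_iota add0n => /andP[_ ik].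
exact: (letter_funP w (ltn_trans ik (ltn_ord k))).
Qed.

Lemma conformal_on_suffix n (w : word n) (k : 'I_n) : conformal_on U (suffix_comp w k).
Proof.
apply: conformal_on_letters => i; rewrite mem_iota subnKC // => /andP[_].
exact: letter_funP.
Qed.

Lemma distortion_prefix_comp n (w : word n) (k : 'I_n) : bounded_distortion (prefix_comp w k).
Proof.
by apply: distortion_prefix => i ik; exact: (letter_funP w (ltn_trans ik (ltn_ord k))).
Qed.

Definition set_letter n (w : word n) (k : 'I_n) (b : 'I_(N k)) : word n :=
  [ffun j => @dfwith _ (fun j : 'I_n => 'I_(N j)) w k b j].
Arguments set_letter {n} w k b.

Lemma set_letter_at n (w : word n) (k : 'I_n) b : set_letter w k b k = b.
Proof. by rewrite ffunE; exact: dfwith_in. Qed.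

Lemma set_letter_out n (w : word n) (k : 'I_n) b j : k != j -> set_letter w k b j = w j.
Proof. by move=> kj; rewrite ffunE; exact: dfwith_out. Qed.

Lemma letter_fun_set_letter n (w : word n) (k : 'I_n) b (i : nat) :
  i != k -> letter_fun (set_letter w k b) i = letter_fun w i.
Proof.
rewrite /letter_fun; case: insubP => [j _ ij|] // ik.
rewrite -ij in ik.
by rewrite set_letter_out //; apply: contraNneq ik => ->.
Qed.

Lemma prefix_comp_set_letter n (w : word n) (k : 'I_n) b :
  prefix_comp (set_letter w k b) k = prefix_comp w k.
Proof.
congr comp_seq; apply/eq_in_map => i; rewrite mem_iota => /andP[_ ik].
by rewrite letter_fun_set_letter // ltn_eqF.
Qed.

Lemma suffix_comp_set_letter n (w : word n) (k : 'I_n) b :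
  suffix_comp (set_letter w k b) k = suffix_comp w k.
Proof.
congr comp_seq; apply/eq_in_map => i; rewrite mem_iota => /andP[ki _].
by rewrite letter_fun_set_letter // gtn_eqF.
Qed.

(* One distortion constant each for: the prefix evaluated after [a] versus after
   [b], and the letters [a] and [b] at a point versus their sup over [X]. *)
Lemma Dnorm_set_letter n (w : word n) (k : 'I_n) (b : 'I_(N k)) x0 : X x0 ->
  Dnorm X (comp_word phi w) * Dnorm X (phi k b) <=
  K ^+ 3 * Dnorm X (phi k (w k)) * Dnorm X (comp_word phi (set_letter w k b)).
Proof.
move=> X0; have n0 : (0 < n)%N := leq_ltn_trans (leq0n k) (ltn_ord k).
have dw' := distortion_word (set_letter w k b) n0.
rewrite [comp_word phi (set_letter _ _ _)](comp_word_split _ k) in dw' *.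
rewrite set_letter_at prefix_comp_set_letter suffix_comp_set_letter in dw' *.
rewrite (comp_word_split w k).
set P := prefix_comp w k; set S := suffix_comp w k; set A := phi k (w k); set B := phi k b.
have cP : conformal_on U P := conformal_on_prefix w k.
have cS : conformal_on U S := conformal_on_suffix w k.
have cA : conformal_on U A := conformal_on_C1 (phiU _ _).
have cB : conformal_on U B := conformal_on_C1 (phiU _ _).
have DA0 : 0 < Dnorm X A := Dnorm_gt0 cA (distortion_letter (w k)) X0.
have DB0 : 0 < Dnorm X B := Dnorm_gt0 cB (distortion_letter b) X0.
have K0 : 0 < K := lt_le_trans ltr01 K1.
rewrite -ler_pdivlMr // {1}/Dnorm; apply: ge_sup; first by exists (dnorm (P \o (A \o S)) x0), x0.
move=> _ [x Xx <-]; have Ux := XU _ Xx; have USx : U (S x) := cS.1 _ Ux.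
rewrite (ler_pdivlMr _ _ DB0) (dnorm_comp_on hd cP (conformal_on_comp cA cS) Ux) /=.
rewrite (dnorm_comp_on hd cA cS Ux).
have hP : dnorm P (A (S x)) <= K * dnorm P (B (S x)).
  by apply: distortion_prefix_comp; [exact: cA.1|exact: cB.1].
have hA : dnorm A (S x) <= K * Dnorm X A.
  apply: (le_trans (distortion_letter (w k) USx (XU _ X0))).
  by rewrite (ler_pM2l K0); exact: (dnorm_le_Dnorm (distortion_letter (w k)) X0).
have hB : Dnorm X B <= K * dnorm B (S x) := Dnorm_le_dnorm (distortion_letter b) X0 USx.
have hW := dnorm_le_Dnorm dw' Xx.
rewrite (dnorm_comp_on hd cP (conformal_on_comp cB cS) Ux) (dnorm_comp_on hd cB cS Ux) /= in hW.
exact: (ler_distortion3 (ltW K0) (dnorm_ge0 _ _) (dnorm_ge0 _ _) (ltW DA0) (ltW DB0)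
  (dnorm_ge0 _ _) hP hA hB hW).
Qed.

Variables (F : forall j, {set 'I_(N j)}) (m : forall j, 'I_(N j)) (t : R).
Hypotheses (mF : forall j, m j \in F j) (ht : 0 < t).

Definition in_F_before k n (w : word n) := [forall j : 'I_n, (j < k)%N ==> (w j \in F j)].

(* [Zpart n k] interpolates between [Zn X phi n t] (for [k = 0]) and the
   [Z_n(t)] of the subsystem (for [k = n]). *)
Definition Zpart n k := \sum_(w : word n | in_F_before k w) Dnorm X (comp_word phi w) `^ t.

Lemma Zpart_ge0 n k : 0 <= Zpart n k.
Proof. by apply: sumr_ge0 => w _; exact: powR_ge0. Qed.

Lemma in_F_beforeS n (k : 'I_n) (w : word n) :
  in_F_before k.+1 w = in_F_before k w && (w k \in F k).
Proof.
apply/forallP/andP => [h|[/forallP h1 h2] j].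
  split; last exact: (implyP (h k)).
  by apply/forallP => j; apply/implyP => jk; apply: (implyP (h j)); exact: leqW.
apply/implyP; rewrite ltnS leq_eqVlt => /orP[/eqP jk|jk]; last exact: (implyP (h1 j)).
by rewrite (val_inj jk).
Qed.

Lemma sum_set_letter_le n (k : 'I_n) (P : pred (word n)) (g : word n -> R) a :
  (forall w, 0 <= g w) -> (forall w, P w -> in_F_before k w) ->
  \sum_(w | P w && (w k == a)) g (set_letter w k (m k)) <= \sum_(w | in_F_before k.+1 w) g w.
Proof.
move=> g0 Pk.
have inj : {in [pred w | P w && (w k == a)] &, injective (fun w => set_letter w k (m k))}.
  move=> w1 w2 /andP[_ /eqP e1] /andP[_ /eqP e2] e; apply/ffunP => j.
  have [<-|kj] := eqVneq k j; first by rewrite e1 e2.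
  by have := congr1 (fun v : word n => v j) e; rewrite /= !set_letter_out.
rewrite (eq_bigl (fun w => w \in [pred w | P w && (w k == a)])) // -(big_imset _ inj) /=.
apply: ler_sum_nneg_subset => // v /imsetP [w /andP[Pw _] ->].
rewrite in_F_beforeS set_letter_at mF andbT; apply/forallP => j; apply/implyP => jk.
rewrite set_letter_out; first exact: (implyP (forallP (Pk _ Pw) j)).
by apply: contraTneq jk => <-; rewrite ltnn.
Qed.

Lemma powR_Dnorm_set_letter n (w : word n) (k : 'I_n) x0 : X x0 ->
  Dnorm X (comp_word phi w) `^ t <=
  (K ^+ 3 * Dnorm X (phi k (w k)) / Dnorm X (phi k (m k))) `^ t *
  Dnorm X (comp_word phi (set_letter w k (m k))) `^ t.
Proof.
move=> X0.
have Dm0 : 0 < Dnorm X (phi k (m k)) :=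
  Dnorm_gt0 (conformal_on_C1 (phiU _ _)) (distortion_letter (m k)) X0.
have c0 : 0 <= K ^+ 3 * Dnorm X (phi k (w k)) / Dnorm X (phi k (m k)).
  apply: divr_ge0 (ltW Dm0); apply: mulr_ge0 (Dnorm_ge0 _ _).
  exact: exprn_ge0 (le_trans ler01 K1).
rewrite -(powRM _ c0 (Dnorm_ge0 _ _)).
apply: (ge0_ler_powR (ltW ht)); rewrite ?nnegrE.
- exact: Dnorm_ge0.
- exact: mulr_ge0 c0 (Dnorm_ge0 _ _).
- by rewrite mulrAC (ler_pdivlMr _ _ Dm0); exact: (Dnorm_set_letter w (m k) X0).
Qed.

Lemma Zpart_step n (k : 'I_n) x0 : X x0 ->
  Zpart n k <= Zpart n k.+1 +
    (\sum_(a | a \notin F k) (K ^+ 3 * Dnorm X (phi k a) / Dnorm X (phi k (m k))) `^ t)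
      * Zpart n k.+1.
Proof.
move=> X0; rewrite /Zpart (bigID (fun w : word n => w k \in F k)) /=.
rewrite (eq_bigl (fun w => in_F_before k.+1 w)); last by move=> w; rewrite in_F_beforeS.
apply: lerD; first exact: lexx.
apply: (le_trans (y := \sum_(w | in_F_before k w && (w k \notin F k))
   (K ^+ 3 * Dnorm X (phi k (w k)) / Dnorm X (phi k (m k))) `^ t *
   Dnorm X (comp_word phi (set_letter w k (m k))) `^ t)).
  by apply: ler_sum => w _; exact: powR_Dnorm_set_letter X0.
rewrite (partition_big (fun w : word n => w k) (fun a => a \notin F k)) /=; last first.
  by move=> w /andP[].
rewrite mulr_suml; apply: ler_sum => a aF.
rewrite (eq_bigr (fun w => (K ^+ 3 * Dnorm X (phi k a) / Dnorm X (phi k (m k))) `^ t *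
   Dnorm X (comp_word phi (set_letter w k (m k))) `^ t)); last by move=> w /andP[_ /eqP ->].
rewrite -mulr_sumr; apply: ler_wpM2l; first exact: powR_ge0.
apply: (sum_set_letter_le (P := fun w => in_F_before k w && (w k \notin F k))).
  by move=> w; exact: powR_ge0.
by move=> w /andP[].
Qed.

Lemma Zpart_iter n (beta : nat -> R) : (forall j, 0 <= beta j) ->
  (forall k : 'I_n, Zpart n k <= beta k * Zpart n k.+1) ->
  Zpart n 0 <= (\prod_(j < n) beta j) * Zpart n n.
Proof.
move=> beta0 step.
suff iter k : (k <= n)%N -> Zpart n 0 <= (\prod_(j < k) beta j) * Zpart n k by exact: iter.
elim: k => [_|k IH kn]; first by rewrite big_ord0 mul1r.
apply: (le_trans (IH (ltnW kn))).
rewrite big_ord_recr /= -mulrA; apply: ler_wpM2l; last exact: (step (Ordinal kn)).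
by apply: prodr_ge0 => j _; exact: beta0.
Qed.

Lemma Zn_Zpart0 n : Zn X phi n t = Zpart n 0.
Proof. by apply: eq_bigl => w; apply/esym/forallP => j; rewrite ltn0. Qed.

Definition word_of_subword n (u : {dffun forall j : 'I_n, 'I_(subN F j)}) : word n :=
  [ffun j => enum_val (u j)].

Lemma Zn_subsystem n : Zn X (subphi phi F) n t = Zpart n n.
Proof.
have comp_sub u : comp_word (subphi phi F) u = comp_word phi (word_of_subword u).
  by rewrite /comp_word; congr comp_seq; apply: eq_map => j; rewrite ffunE.
rewrite /Zn (eq_bigr (fun u => Dnorm X (comp_word phi (word_of_subword u)) `^ t)); last first.
  by move=> u _; rewrite comp_sub.
have inj : {in [set: {dffun forall j : 'I_n, 'I_(subN F j)}] &, injective (@word_of_subword n)}.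
  move=> u1 u2 _ _ e; apply/ffunP => j; apply: enum_val_inj.
  by have := congr1 (fun v : word n => v j) e; rewrite /= !ffunE.
rewrite (eq_bigl (fun u => u \in [set: {dffun forall j : 'I_n, 'I_(subN F j)}])); last first.
  by move=> u; rewrite in_setT.
rewrite -(big_imset (fun w : word n => Dnorm X (comp_word phi w) `^ t) inj) /Zpart.
apply: eq_bigl => w.
apply/imsetP/idP => [[u _ ->]|wF].
  by apply/forallP => j; apply/implyP => _; rewrite ffunE; exact: enum_valP.
have wF' j : w j \in F j by exact: (implyP (forallP wF j)).
exists ([ffun j => enum_rank_in (wF' j) (w j)] : {dffun forall j : 'I_n, 'I_(subN F j)}).
  by rewrite in_setT.
by apply/ffunP => j; rewrite !ffunE (enum_rankK_in (wF' j) (wF' j)).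
Qed.

Lemma Zn_subsystem_le n : Zn X (subphi phi F) n t <= Zn X phi n t.
Proof.
rewrite Zn_subsystem Zn_Zpart0; apply: ler_sum_nneg_subset => w _; last exact: powR_ge0.
by apply/forallP => j; rewrite ltn0.
Qed.

Lemma Zn_subsystem_gt0 n x0 : X x0 -> 0 < Zn X (subphi phi F) n.+1 t.
Proof.
move=> X0; rewrite Zn_subsystem.
pose wm : word n.+1 := [ffun j : 'I_n.+1 => m j].
have wmF : in_F_before n.+1 wm by apply/forallP => j; apply/implyP => _; rewrite ffunE.
rewrite /Zpart (bigD1 wm wmF) /=.
have W0 : 0 < Dnorm X (comp_word phi wm).
  exact: (Dnorm_gt0 (conformal_on_word wm) (distortion_word wm (ltn0Sn n)) X0).
apply: (lt_le_trans (powR_gt0 t W0)); rewrite lerDl.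
by apply: sumr_ge0 => w _; exact: powR_ge0.
Qed.

Variables (t0 : R) (alpha : nat -> R).
Hypotheses (ht0 : 0 < t0) (t0t : t0 <= t) (alpha1 : forall k, 1 <= alpha k)
  (F_gap : forall k a, a \notin F k ->
     alpha k * (N k)%:R `^ t0^-1 * Dnorm X (phi k a) <= Dnorm X (phi k (m k))).

Lemma Zpart_step_alpha n (k : 'I_n) x0 : X x0 ->
  Zpart n k <= (1 + (K ^+ 3) `^ t / alpha k `^ t) * Zpart n k.+1.
Proof.
move=> X0; apply: (le_trans (Zpart_step k X0)).
rewrite mulrDl mul1r lerD2l; apply: ler_wpM2r; first exact: Zpart_ge0.
have Dm0 := Dnorm_gt0 (conformal_on_C1 (phiU _ _)) (distortion_letter (m k)) X0.
have K3 : 0 <= K ^+ 3 by exact: exprn_ge0 (le_trans ler01 K1).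
have Nk : (0 < #|'I_(N k)|)%N by rewrite card_ord (leq_ltn_trans _ (ltn_ord (m k))).
apply: (sum_powR_scaled_ratio_le ht0 t0t (alpha1 k) K3 Dm0 (fun a => Dnorm_ge0 _ _) Nk).
by move=> a aF; rewrite card_ord; exact: F_gap.
Qed.

Lemma lower_pressure_subsystem x0 : X x0 -> alpha @ \oo --> +oo ->
  lower_pressure X (subphi phi F) t = lower_pressure X phi t.
Proof.
move=> X0 alpha_cvg; have alpha0 k : 0 < alpha k := lt_le_trans ltr01 (alpha1 k).
pose u j := (K ^+ 3) `^ t / alpha j `^ t.
have u0 j : 0 <= u j by rewrite divr_ge0 ?powR_ge0.
have Zn_le_prod n : Zn X phi n.+1 t <= \prod_(j < n.+1) (1 + u j) * Zn X (subphi phi F) n.+1 t.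
  rewrite Zn_subsystem Zn_Zpart0; apply: (Zpart_iter (beta := fun j => 1 + u j)) => [j|k].
    by rewrite addr_ge0.
  exact: Zpart_step_alpha X0.
exact: (limn_einf_ln_div_eq (fun n => Zn_subsystem_gt0 n X0) (fun n => Zn_subsystem_le n.+1)
  Zn_le_prod u0 (cvg_div_powR (powR_ge0 _ _) ht alpha0 alpha_cvg)).
Qed.

End System.

Lemma Zn_eq0 (R : realType) (d : nat) (X : set 'rV[R]_d) (N : nat -> nat)
  (phi : forall j, 'I_(N j) -> 'rV[R]_d -> 'rV[R]_d) n t :
  ~ (exists x, X x) -> t != 0 -> Zn X phi n t = 0.
Proof.
move=> noX t0; rewrite /Zn big1 // => w _.
have -> : Dnorm X (comp_word phi w) = 0.
  rewrite /Dnorm (_ : [set dnorm (comp_word phi w) x | x in X] = set0) ?sup0 //.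
  by apply/seteqP; split => // y [x Xx _]; apply: noX; exists x.
exact: powR0.
Qed.

Unset Implicit Arguments.
Theorem corollary5p2 (R : realType) (d : nat) (hd : (0 < d)%N)
  (X : set 'rV[R]_d) (hX : admissible_X X)
  (N : nat -> nat) (hN : forall j, (0 < N j)%N)
  (phi : forall j, 'I_(N j) -> 'rV[R]_d -> 'rV[R]_d)
  (hPhi : is_NCIFS X phi)
  (t0 : R) (ht0 : 0 < t0)
  (alpha : nat -> R) (halpha1 : forall n, 1 <= alpha n)
  (halpha : alpha @ \oo --> +oo) :
  exists F : forall j, {set 'I_(N j)},
    [/\ (forall j, (0 < #|F j|)%N),
        (forall t, t0 <= t ->
           lower_pressure X (N := subN F) (subphi phi F) t = lower_pressure X phi t)
      & (forall n (a b : 'I_(N n)), a \in F n -> b \in F n ->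
           Dnorm X (phi n a) / Dnorm X (phi n b)
             <= alpha n * (N n)%:R `^ t0^-1)].
Proof.
case: hPhi => _ _ [U [_ _ XU phiU [K K1 phi_dist]]] _.
pose D k (a : 'I_(N k)) := Dnorm X (phi k a).
pose m k := [arg max_(i > Ordinal (hN k)) D k i]%O.
have D_le_m k a : D k a <= D k (m k).
  by rewrite /m; case: (arg_maxP (D k) (isT : xpredT (Ordinal (hN k)))) => i _; apply.
pose c k := alpha k * (N k)%:R `^ t0^-1.
have c1 k : 1 <= c k.
  rewrite -[1]mul1r; apply: ler_pM; rewrite ?ler01 ?halpha1 //.
  by rewrite -[leLHS](powRr0 (N k)%:R) ler_powR ?ler1n ?invr_ge0 ?ltW.
pose F k := [set a | D k (m k) <= c k * D k a]%SET.
have mF k : m k \in F k.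
  by rewrite inE -[leLHS]mul1r; apply: ler_wpM2r (c1 k); exact: Dnorm_ge0.
exists F; split.
- by move=> j; apply/card_gt0P; exists (m j); exact: mF.
- move=> t t0t; have ht := lt_le_trans ht0 t0t.
  have [[x0 X0]|noX] := pselect (exists x0, X x0).
    apply: (lower_pressure_subsystem hd XU phiU K1 phi_dist mF ht ht0 t0t halpha1 _ X0 halpha).
    by move=> k a; rewrite inE -ltNge => /ltW.
  rewrite /lower_pressure; congr limn_einf; apply/funext => n.
  by rewrite !Zn_eq0 // lt0r_neq0.
- move=> n a b _; rewrite inE => hb.
  have := Dnorm_ge0 X (phi n b); rewrite le_eqVlt => /orP[/eqP <-|Db0].
    by rewrite invr0 mulr0; exact: le_trans ler01 (c1 n).
  by rewrite (ler_pdivrMr _ _ Db0); exact: le_trans (D_le_m n a) hb.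
Qed.
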